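(* Let $n$ training samples carry labels in $\{1,\dots,K\}$ with indicator matrix $F\in\mathbb{R}^{K\times n}$ (rows $F_1,\dots,F_K$). Let the basis $G_1,\dots,G_r$ ($r\le n$) be a subset of the training samples with every class containing at least one basis vector, and let $F_{G_i}$ be the class indicator of $G_i$. Let $W\in\mathbb{R}^{r\times n}$ be entrywise nonnegative with positive column sums, $S=\operatorname{diag}(\mathbf{1}^TW)$, $\tilde W=WS^{-1}$ of full row rank, and suppose $W_{ij}=0$ whenever $F_{G_i}\neq F_j$. For each class $k$ let $\tilde W^{(k)}$ be the submatrix of $\tilde W$ with rows indexed by the basis vectors of class $k$ and columns indexed by the training samples of class $k$. Then the following are equivalent: (i) for every $k$, $F_k/\|F_k\|_2$ is a right singular vector of $\tilde W$ whose singular value equals the largest singular value of $\tilde W^{(k)}$; (ii) the row sums of $\tilde W$ are equal within each class: $\sum_l\tilde W_{il}=\sum_l\tilde W_{jl}$ for all $i,j$ with $F_{G_i}=F_{G_j}$.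
   Context: The columns of $F$ are standard basis vectors of $\mathbb{R}^K$: $F_j=e_k$ iff sample $j$ is in class $k$. Under the stated (ideal bipartite-graph) condition, after grouping rows and columns by class, $\tilde W$ is block diagonal with blocks $\tilde W^{(k)}$; statement (i) is the meaning of ''the rows of $F$ are the right singular vectors of $\tilde W$ corresponding to the largest singular values'' (of the respective class blocks). *)

From HB Require Import structures.
From mathcomp Require Import all_boot all_order all_algebra.
Set Implicit Arguments. Unset Strict Implicit. Unset Printing Implicit Defensive.
Import Order.TTheory GRing.Theory Num.Theory.
Local Open Scope ring_scope.

Section Defs.
Variable R : rcfType.

Definition vnorm m (v : 'cV[R]_m) : R := Num.sqrt (\sum_i v i 0 ^+ 2).

Definition sv_triple m n (A : 'M[R]_(m, n)) (u : 'cV[R]_m) (v : 'cV[R]_n) (s : R) :=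
  [/\ 0 <= s, vnorm u = 1, vnorm v = 1, A *m v = s *: u & A^T *m u = s *: v].

Definition right_singular_vector m n (A : 'M[R]_(m, n)) (v : 'cV[R]_n) (s : R) :=
  exists u, sv_triple A u v s.

Definition singular_value m n (A : 'M[R]_(m, n)) (s : R) :=
  exists u v, sv_triple A u v s.

Definition largest_singular_value m n (A : 'M[R]_(m, n)) (s : R) :=
  singular_value A s /\ forall t, singular_value A t -> t <= s.

Definition indicator K n (lab : 'I_n -> 'I_K) : 'M[R]_(K, n) :=
  \matrix_(k, j) (lab j == k)%:R.

Definition colsum_diag r n (W : 'M[R]_(r, n)) : 'M[R]_n :=
  diag_mx (\row_j \sum_i W i j).
Definition Wtilde r n (W : 'M[R]_(r, n)) : 'M[R]_(r, n) :=
  W *m invmx (colsum_diag W).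

Definition basis_of_class K n r (lab : 'I_n -> 'I_K) (g : 'I_r -> 'I_n) (k : 'I_K)
  : {set 'I_r} := [set i | lab (g i) == k].
Definition samples_of_class K n (lab : 'I_n -> 'I_K) (k : 'I_K) : {set 'I_n} :=
  [set j | lab j == k].

Definition class_block K n r (lab : 'I_n -> 'I_K) (g : 'I_r -> 'I_n) (k : 'I_K)
  (A : 'M[R]_(r, n)) : 'M[R]_(#|basis_of_class lab g k|, #|samples_of_class lab k|) :=
  mxsub (fun i : 'I_#|basis_of_class lab g k| => enum_val i)
        (fun j : 'I_#|samples_of_class lab k| => enum_val j) A.

End Defs.

(* Write A for W~: it is nonnegative, its columns sum to 1 and it vanishes
   outside the class blocks. Let x_k be the indicator of the basis vectors of
   class k. Then A^T x_k = F_k, and A F_k is x_k weighted by the row sums of A.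
   If F_k/|F_k| is a right singular vector for s, then A^T (A F_k) = s^2 F_k
   = A^T (s^2 x_k), and since A has full row rank, A F_k = s^2 x_k: every row
   of class k sums to s^2. Conversely, if the rows of class k all sum to rho,
   then A F_k = rho x_k and A^T x_k = F_k, so F_k/|F_k| is a right singular
   vector for sqrt rho. The block A^(k) is nonnegative with row sums rho and
   column sums 1; the Schur test |B v|^2 <= (row sum)(column sum) |v|^2 bounds
   its singular values by sqrt rho, and the constant vectors attain it. *)

From mathcomp Require Import all_boot all_order all_algebra.
From mathcomp Require Import ring.
Set Implicit Arguments. Unset Strict Implicit. Unset Printing Implicit Defensive.
Import Order.TTheory GRing.Theory Num.Theory.
Local Open Scope ring_scope.

Section SingularValues.
Variable R : rcfType.

Lemma weighted_sum_sqr_le n (w v : 'I_n -> R) : (forall l, 0 <= w l) ->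
  (\sum_l w l * v l) ^+ 2 <= (\sum_l w l) * \sum_l w l * v l ^+ 2.
Proof.
move=> w_ge0.
have pair_ge0 : 0 <= \sum_l \sum_l' w l * w l' * (v l - v l') ^+ 2.
  by do 2!apply: sumr_ge0 => ? _; rewrite mulr_ge0 ?sqr_ge0 ?mulr_ge0.
suff pairE : \sum_l \sum_l' w l * w l' * (v l - v l') ^+ 2 =
    2%:R * ((\sum_l w l) * (\sum_l w l * v l ^+ 2) - (\sum_l w l * v l) ^+ 2).
  by rewrite pairE pmulr_rge0 ?ltr0n // subr_ge0 in pair_ge0.
pose P l l' := w l' * (w l * v l ^+ 2); pose C l l' := w l * v l * (w l' * v l').
have -> : \sum_l \sum_l' w l * w l' * (v l - v l') ^+ 2 =
    \sum_l \sum_l' (P l l' + P l' l - 2%:R * C l l').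
  by do 2!(apply: eq_bigr => ? _); rewrite /P /C; ring.
under eq_bigr do rewrite sumrB big_split /=.
rewrite sumrB big_split /= [X in _ + X - _]exchange_big /=.
have -> : \sum_l \sum_l' P l l' = (\sum_l w l) * \sum_l w l * v l ^+ 2.
  by rewrite mulr_sumr; apply: eq_bigr => l _; rewrite mulr_suml.
rewrite [X in _ - X](_ : _ = 2%:R * (\sum_l w l * v l) ^+ 2); last first.
  by rewrite expr2 big_distrlr mulr_sumr; apply: eq_bigr => l _; rewrite mulr_sumr.
ring.
Qed.

Lemma vnorm_sqr m (v : 'cV[R]_m) : vnorm v ^+ 2 = \sum_i v i 0 ^+ 2.
Proof. by rewrite sqr_sqrtr // sumr_ge0 // => i _; rewrite sqr_ge0. Qed.

Lemma vnorm_sqr_mx m (v : 'cV[R]_m) : v^T *m v = (vnorm v ^+ 2)%:M.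
Proof.
apply/matrixP => i j; rewrite !ord1 !mxE eqxx mulr1n vnorm_sqr.
by apply: eq_bigr => l _; rewrite mxE expr2.
Qed.

Lemma vnorm_ge0 m (v : 'cV[R]_m) : 0 <= vnorm v.
Proof. exact: sqrtr_ge0. Qed.

Lemma vnorm_gt0 m (v : 'cV[R]_m) : v != 0 -> 0 < vnorm v.
Proof.
move=> v_neq0; rewrite sqrtr_gt0 lt_def sumr_ge0 ?andbT => [|i _]; last exact: sqr_ge0.
apply: contra v_neq0 => /eqP/psumr_eq0P sum0; apply/eqP/matrixP => i j.
by rewrite ord1 mxE; apply/eqP; rewrite -sqrf_eq0 sum0 // => l _; rewrite sqr_ge0.
Qed.

Lemma vnormZ m a (v : 'cV[R]_m) : vnorm (a *: v) = `|a| * vnorm v.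
Proof.
rewrite /vnorm -sqrtr_sqr -sqrtrM ?sqr_ge0 // mulr_sumr.
by congr Num.sqrt; apply: eq_bigr => i _; rewrite mxE exprMn.
Qed.

Lemma vnorm_normalize m (v : 'cV[R]_m) : v != 0 -> vnorm ((vnorm v)^-1 *: v) = 1.
Proof.
move=> /vnorm_gt0 v_gt0.
by rewrite vnormZ ger0_norm ?invr_ge0 ?ltW // mulVf ?gt_eqF.
Qed.

Lemma sv_triple_normalize m p (A : 'M[R]_(m, p)) (x : 'cV[R]_m) (y : 'cV[R]_p) (c d : R) :
  0 <= c -> 0 <= d -> x != 0 -> y != 0 ->
  A *m y = c *: x -> A^T *m x = d *: y ->
  sv_triple A ((vnorm x)^-1 *: x) ((vnorm y)^-1 *: y) (Num.sqrt (c * d)).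
Proof.
move=> c_ge0 d_ge0 x_neq0 y_neq0 Ay ATx.
have a_neq0 : vnorm x != 0 by rewrite gt_eqF // vnorm_gt0.
have b_neq0 : vnorm y != 0 by rewrite gt_eqF // vnorm_gt0.
(* Computing x^T A y in two ways forces the two scalings to agree. *)
have balance : c * vnorm x ^+ 2 = d * vnorm y ^+ 2.
  have dual : x^T *m (A *m y) = (A^T *m x)^T *m y.
    by rewrite trmx_mul trmxK mulmxA.
  move: dual; rewrite Ay ATx -scalemxAr linearZ /= -scalemxAl !vnorm_sqr_mx.
  by rewrite !scale_scalar_mx => /(congr1 (fun M : 'M_1 => M 0 0)); rewrite !mxE !eqxx !mulr1n.
have dE : d = c * vnorm x ^+ 2 / vnorm y ^+ 2.
  by rewrite balance mulfK // expf_neq0.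
have sE : Num.sqrt (c * d) = c * vnorm x / vnorm y.
  rewrite (_ : c * d = (c * vnorm x / vnorm y) ^+ 2); last by rewrite dE; field.
  by rewrite sqrtr_sqr ger0_norm // divr_ge0 ?mulr_ge0 ?vnorm_ge0.
have Av : A *m ((vnorm y)^-1 *: y) = Num.sqrt (c * d) *: ((vnorm x)^-1 *: x).
  by rewrite -scalemxAr Ay !scalerA sE; congr (_ *: _); field; rewrite a_neq0 b_neq0.
have ATu : A^T *m ((vnorm x)^-1 *: x) = Num.sqrt (c * d) *: ((vnorm y)^-1 *: y).
  by rewrite -scalemxAr ATx !scalerA sE dE; congr (_ *: _); field; rewrite a_neq0 b_neq0.
by split; rewrite ?sqrtr_ge0 ?vnorm_normalize.
Qed.

Lemma sum_sqr_mulmx_le m p (B : 'M[R]_(m, p)) (c d : R) (v : 'cV[R]_p) :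
  0 <= c -> (forall i j, 0 <= B i j) ->
  (forall i, \sum_j B i j <= c) -> (forall j, \sum_i B i j <= d) ->
  \sum_i (B *m v) i 0 ^+ 2 <= c * d * \sum_j v j 0 ^+ 2.
Proof.
move=> c_ge0 B_ge0 rowB colB.
apply: (@le_trans _ _ (\sum_i c * \sum_j B i j * v j 0 ^+ 2)).
  apply: ler_sum => i _; rewrite mxE.
  apply: le_trans (weighted_sum_sqr_le (fun j => v j 0) (B_ge0 i)) _.
  by rewrite ler_wpM2r ?sumr_ge0 // => j _; rewrite mulr_ge0 ?sqr_ge0.
rewrite -mulr_sumr exchange_big -mulrA ler_wpM2l //= mulr_sumr.
by apply: ler_sum => j _; rewrite -mulr_suml ler_wpM2r ?sqr_ge0.
Qed.

Lemma singular_value_sqr_le m p (B : 'M[R]_(m, p)) (c d t : R) :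
  0 <= c -> (forall i j, 0 <= B i j) ->
  (forall i, \sum_j B i j <= c) -> (forall j, \sum_i B i j <= d) ->
  singular_value B t -> t ^+ 2 <= c * d.
Proof.
move=> c_ge0 B_ge0 rowB colB [u [v [t_ge0 u1 v1 Bv _]]].
have := sum_sqr_mulmx_le v c_ge0 B_ge0 rowB colB.
by rewrite Bv -!vnorm_sqr vnormZ u1 v1 ger0_norm // !expr1n !mulr1.
Qed.

Lemma largest_singular_value_const_sums m p (B : 'M[R]_(m, p)) (c d : R) :
  (0 < m)%N -> (0 < p)%N -> (forall i j, 0 <= B i j) ->
  (forall i, \sum_j B i j = c) -> (forall j, \sum_i B i j = d) ->
  largest_singular_value B (Num.sqrt (c * d)).
Proof.
move=> m_gt0 p_gt0 B_ge0 rowB colB.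
have c_ge0 : 0 <= c by rewrite -(rowB (Ordinal m_gt0)) sumr_ge0.
have d_ge0 : 0 <= d by rewrite -(colB (Ordinal p_gt0)) sumr_ge0.
have ones_neq0 k : (0 < k)%N -> const_mx 1 != 0 :> 'cV[R]_k.
  by move=> k_gt0; apply/eqP => /matrixP/(_ (Ordinal k_gt0) 0)/eqP; rewrite !mxE oner_eq0.
split=> [|t sv_t].
  exists ((vnorm (const_mx 1 : 'cV_m))^-1 *: const_mx 1).
  exists ((vnorm (const_mx 1 : 'cV_p))^-1 *: const_mx 1).
  apply: sv_triple_normalize; rewrite ?ones_neq0 //; apply/matrixP => i j.
    by rewrite !mxE mulr1 -(rowB i); apply: eq_bigr => l _; rewrite !mxE mulr1.
  by rewrite !mxE mulr1 -(colB i); apply: eq_bigr => l _; rewrite !mxE mulr1.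
have [_ [_ [t_ge0 _ _ _ _]]] := sv_t.
rewrite -(ger0_norm t_ge0) -sqrtr_sqr ler_sqrt ?mulr_ge0 //.
by apply: (singular_value_sqr_le c_ge0 B_ge0) => // [i|j]; rewrite ?rowB ?colB.
Qed.

End SingularValues.

Lemma trmx_mulmx_inj (F : fieldType) m p q (A : 'M[F]_(m, p)) :
  row_free A -> injective (@mulmx _ p m q A^T).
Proof.
move=> A_free y z /(congr1 trmx); rewrite !trmx_mul trmxK.
by move/(row_free_inj A_free)/trmx_inj.
Qed.

Section Indicator.
Variables (R : rcfType) (K n : nat) (lab : 'I_n -> 'I_K).

Lemma indicator_colE k j : (row k (indicator R lab))^T j 0 = (lab j == k)%:R.
Proof. by rewrite !mxE. Qed.

Lemma indicator_col_neq0 k j : lab j = k -> (row k (indicator R lab))^T != 0.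
Proof.
move=> lab_j; apply/eqP => /matrixP/(_ j 0)/eqP.
by rewrite indicator_colE mxE lab_j eqxx oner_eq0.
Qed.

End Indicator.

Section BlockStochastic.
Variables (R : rcfType) (K n r : nat) (lab : 'I_n -> 'I_K) (g : 'I_r -> 'I_n).
Variable A : 'M[R]_(r, n).
Hypothesis A_colsum : forall l, \sum_i A i l = 1.
Hypothesis A_support : forall i l, lab (g i) != lab l -> A i l = 0.

Local Notation F k := (row k (indicator R lab))^T.
Local Notation Fbasis k := (row k (indicator R (lab \o g)))^T.

Lemma support_mul_indicator k i l :
  A i l * (lab (g i) == k)%:R = A i l * (lab l == k)%:R.
Proof. by have [->|/A_support->] := eqVneq (lab (g i)) (lab l); rewrite ?mul0r. Qed.

Lemma trmx_mul_basis_indicator k : A^T *m Fbasis k = F k.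
Proof.
apply/matrixP => l j; rewrite ord1 mxE indicator_colE.
transitivity ((\sum_i A i l) * (lab l == k)%:R); last by rewrite A_colsum mul1r.
by rewrite mulr_suml; apply: eq_bigr => i _; rewrite !mxE support_mul_indicator.
Qed.

Lemma mulmx_indicator_colE k i :
  (A *m F k) i 0 = (\sum_l A i l) * (lab (g i) == k)%:R.
Proof.
rewrite mxE mulr_suml; apply: eq_bigr => l _.
by rewrite indicator_colE support_mul_indicator.
Qed.

Lemma class_block_rowsum k i :
  \sum_j class_block lab g k A i j = \sum_l A (enum_val i) l.
Proof.
have /[!inE] /eqP lab_i := enum_valP i.
under eq_bigr do rewrite mxE.
rewrite -(big_enum_val (fun l => A (enum_val i) l)) big_mkcond /=.
apply: eq_bigr => l _; rewrite inE; have [//|] := eqVneq (lab l) k.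
by move=> lab_l; rewrite A_support // lab_i eq_sym.
Qed.

Lemma class_block_colsum k j : \sum_i class_block lab g k A i j = 1.
Proof.
have /[!inE] /eqP lab_j := enum_valP j.
under eq_bigr do rewrite mxE.
rewrite -(big_enum_val (fun i => A i (enum_val j))) big_mkcond /= -(A_colsum (enum_val j)).
apply: eq_bigr => i _; rewrite inE; have [//|] := eqVneq (lab (g i)) k.
by move=> lab_gi; rewrite A_support // lab_j.
Qed.

Lemma rowsum_eq_of_right_singular k s : row_free A ->
  right_singular_vector A ((vnorm (F k))^-1 *: F k) s ->
  forall i, lab (g i) = k -> \sum_l A i l = s ^+ 2.
Proof.
move=> A_free [u [_ _ _ Av ATu]] i lab_i.
have F_neq0 : vnorm (F k) != 0 by rewrite gt_eqF // vnorm_gt0 // (indicator_col_neq0 _ lab_i).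
have gram : A^T *m (A *m F k) = s ^+ 2 *: F k.
  move: (congr1 (mulmx A^T) Av); rewrite -!scalemxAr ATu !scalerA mulrC -expr2 -scalerA.
  by move/(scalerI (invr_neq0 F_neq0)).
have AF : A *m F k = s ^+ 2 *: Fbasis k.
  by apply: (trmx_mulmx_inj A_free); rewrite gram -scalemxAr trmx_mul_basis_indicator.
move: (congr1 (fun M : 'cV_r => M i 0) AF) => /=.
by rewrite mulmx_indicator_colE mxE indicator_colE /= lab_i eqxx !mulr1.
Qed.

Lemma right_singular_of_rowsum_eq k i0 : (forall i l, 0 <= A i l) ->
  lab (g i0) = k -> (forall i, lab (g i) = k -> \sum_l A i l = \sum_l A i0 l) ->
  exists s, largest_singular_value (class_block lab g k A) s /\
            right_singular_vector A ((vnorm (F k))^-1 *: F k) s.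
Proof.
move=> A_ge0 lab_i0 rowsum_eq; set rho := \sum_l A i0 l.
have rho_ge0 : 0 <= rho by exact: sumr_ge0.
have AF : A *m F k = rho *: Fbasis k.
  apply/matrixP => i j; rewrite ord1 mulmx_indicator_colE mxE indicator_colE /=.
  by have [/rowsum_eq->|] := eqVneq (lab (g i)) k; rewrite ?mulr0.
exists (Num.sqrt (rho * 1)); split.
  apply: largest_singular_value_const_sums => [||i j|i|j].
  - by apply/card_gt0P; exists i0; rewrite inE lab_i0.
  - by apply/card_gt0P; exists (g i0); rewrite inE lab_i0.
  - by rewrite mxE.
  - by rewrite class_block_rowsum rowsum_eq //; have /[!inE] /eqP := enum_valP i.
  - exact: class_block_colsum.
exists ((vnorm (Fbasis k))^-1 *: Fbasis k); apply: sv_triple_normalize => //.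
- exact: (indicator_col_neq0 _ lab_i0).
- exact: (indicator_col_neq0 _ lab_i0).
- by rewrite trmx_mul_basis_indicator scale1r.
Qed.

Lemma right_singular_indicators_iff : (forall i l, 0 <= A i l) -> row_free A ->
  (forall k, exists i, lab (g i) = k) ->
  (forall k : 'I_K,
     let Fk := F k in
     exists s, largest_singular_value (class_block lab g k A) s /\
               right_singular_vector A ((vnorm Fk)^-1 *: Fk) s)
  <->
  (forall i j, lab (g i) = lab (g j) -> \sum_l A i l = \sum_l A j l).
Proof.
move=> A_ge0 A_free has_basis; split=> [sv i j lab_ij | rowsum_eq k].
  have [s [_ rsv]] := sv (lab (g i)).
  by rewrite !(rowsum_eq_of_right_singular A_free rsv).
have [i0 lab_i0] := has_basis k.
apply: (right_singular_of_rowsum_eq A_ge0 lab_i0) => i lab_i.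
by apply: rowsum_eq; rewrite lab_i lab_i0.
Qed.

End BlockStochastic.

Lemma WtildeE (R : rcfType) r n (W : 'M[R]_(r, n)) :
  (forall j, \sum_i W i j != 0) -> forall i j, Wtilde W i j = W i j / \sum_i W i j.
Proof.
move=> colsum_neq0 i j.
have D_unit : colsum_diag W \in unitmx.
  by rewrite unitmxE det_diag unitfE; apply/prodf_neq0 => l _; rewrite mxE.
have := congr1 (fun M : 'M_(r, n) => M i j) (mulmxKV D_unit W).
by rewrite -/(Wtilde W) /colsum_diag mul_mx_diag !mxE => <-; rewrite mulfK.
Qed.

Theorem theorem3 (R : rcfType) (K n r : nat) (lab : 'I_n -> 'I_K)
  (g : 'I_r -> 'I_n) (W : 'M[R]_(r, n)) :
  injective g -> (r <= n)%N ->
  (forall k : 'I_K, exists i : 'I_r, lab (g i) = k) ->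
  (forall i j, 0 <= W i j) ->
  (forall j, 0 < \sum_i W i j) ->
  row_free (Wtilde W) ->
  (forall i j, lab (g i) != lab j -> W i j = 0) ->
  (forall k : 'I_K,
     let Fk := (row k (indicator R lab))^T in
     exists s, largest_singular_value (class_block lab g k (Wtilde W)) s /\
               right_singular_vector (Wtilde W) ((vnorm Fk)^-1 *: Fk) s)
  <->
  (forall i j : 'I_r, lab (g i) = lab (g j) ->
     \sum_l Wtilde W i l = \sum_l Wtilde W j l).
Proof.
move=> _ _ has_basis W_ge0 colsum_gt0 Wt_free W_support.
have WtE := WtildeE (fun j => lt0r_neq0 (colsum_gt0 j)).
apply: right_singular_indicators_iff => // [l|i l lab_il|i l].
- by under eq_bigr do rewrite WtE; rewrite -mulr_suml mulfV ?gt_eqF.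
- by rewrite WtE W_support ?mul0r.
- by rewrite WtE divr_ge0 // ltW.
Qed.
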